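(* Let $M=M_1\oplus M_2$ be a right $R$-module which is a duo module (or a distributive module). Then $M$ is principally Goldie*-lifting if and only if both $M_1$ and $M_2$ are principally Goldie*-lifting.
   Context: $R$ is an associative ring with identity; modules are unital right $R$-modules. A submodule $N$ of $M$ is fully invariant if $f(N)\subseteq N$ for every $f\in\mathrm{End}(M)$; $M$ is a duo module if every submodule is fully invariant. $M$ is distributive if for all submodules $A,B,C$, $A+(B\cap C)=(A+B)\cap(A+C)$ (equivalently $A\cap(B+C)=(A\cap B)+(A\cap C)$). $K\ll N$ means $K$ is small in $N$. For submodules $X,Y$ of a module $N$, $X\,\beta^*\,Y$ in $N$ means $(X+Y)/X\ll N/X$ and $(X+Y)/Y\ll N/Y$. A module $N$ is principally Goldie*-lifting if for every cyclic submodule $X$ of $N$ there is a direct summand $D$ of $N$ with $X\,\beta^*\,D$ in $N$. *)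

From HB Require Import structures.
From mathcomp Require Import all_boot all_order all_algebra.
Set Implicit Arguments. Unset Strict Implicit. Unset Printing Implicit Defensive.
Import GRing.Theory.
Local Open Scope ring_scope.

(* Right R-modules are represented as left modules over the converse ring
   R^c : for m : M and r : R, the right action m r is written r *: m. *)

Section Submodules.
Variables (R : nzRingType) (M : lmodType R^c).

Definition submod (A : M -> Prop) : Prop :=
  A 0 /\ (forall x y, A x -> A y -> A (x + y)) /\
  (forall (r : R^c) x, A x -> A (r *: x)).

Definition subm (A B : M -> Prop) : Prop := forall x, A x -> B x.
Definition eqm (A B : M -> Prop) : Prop := forall x, A x <-> B x.
Definition fullm : M -> Prop := fun _ => True.
Definition zerom : M -> Prop := fun x => x = 0.
Definition addm (A B : M -> Prop) : M -> Prop :=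
  fun x => exists a b, A a /\ B b /\ x = a + b.
Definition capm (A B : M -> Prop) : M -> Prop := fun x => A x /\ B x.

Definition cyclicm (m : M) : M -> Prop := fun x => exists r : R^c, x = r *: m.

Definition fully_invariant (N : M -> Prop) : Prop :=
  forall (f : {linear M -> M}) x, N x -> N (f x).
Definition duo : Prop := forall N, submod N -> fully_invariant N.

Definition distributive : Prop :=
  forall A B C, submod A -> submod B -> submod C ->
    eqm (addm A (capm B C)) (capm (addm A B) (addm A C)).

Definition direct_summand (D : M -> Prop) : Prop :=
  submod D /\ exists D', submod D' /\ eqm (addm D D') fullm /\
                         eqm (capm D D') zerom.

(* K / X << M / X, for submodules X <= K of M, expressed through the
   correspondence between submodules of M/X and submodules of M containing X:
   every submodule L of M with X <= L and K + L = M equals M. *)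
Definition small_mod (X K : M -> Prop) : Prop :=
  forall L, submod L -> subm X L -> eqm (addm K L) fullm -> eqm L fullm.

Definition beta_star (X Y : M -> Prop) : Prop :=
  small_mod X (addm X Y) /\ small_mod Y (addm X Y).

Definition principally_Goldie_star_lifting : Prop :=
  forall m : M, exists D, direct_summand D /\ beta_star (cyclicm m) D.

End Submodules.

From HB Require Import structures.
From mathcomp Require Import all_boot all_order all_algebra.

Set Implicit Arguments.
Unset Strict Implicit.
Unset Printing Implicit Defensive.

Import GRing.Theory.
Local Open Scope ring_scope.

#[local] Arguments fullm {R M}.

(* When every submodule of M = M1 (+) M2 is the sum of its traces on M1 and
   M2 (as happens in a duo or a distributive module), each M_i is a retract of
   M whose idempotent e_i = i_i p_i stabilises all submodules.  Along such a
   retract, direct summands and the smallness conditions defining beta* can be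
   pulled back, which gives the forward implication; for the converse, the
   witness for (m1, m2) is the product D1 (+) D2 of the witnesses for m1 and
   m2, and a submodule of M is full as soon as both its traces are. *)

Section Closure.
Variables (R : nzRingType) (M N : lmodType R^c).

Lemma submodB (A : M -> Prop) x y : submod A -> A x -> A y -> A (x - y).
Proof.
by move=> [_ [AD AZ]] Ax Ay; rewrite -scaleN1r; apply: AD => //; exact: AZ.
Qed.

Lemma submod_zerom : submod (@zerom _ M).
Proof.
split=> //; split=> [x y -> -> | r x ->]; by rewrite ?addr0 ?scaler0.
Qed.

Lemma submod_capm (A B : M -> Prop) :
  submod A -> submod B -> submod (capm A B).
Proof.
move=> [A0 [AD AZ]] [B0 [BD BZ]]; split=> //.
split=> [x y [Ax Bx] [Ay By] | r x [Ax Bx]]; split; by [apply: AD | apply: BD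
  | apply: AZ | apply: BZ].
Qed.

Lemma submod_preim (f : {linear N -> M}) (A : M -> Prop) :
  submod A -> submod (A \o f).
Proof.
move=> [A0 [AD AZ]]; split; first by rewrite /= raddf0.
split=> [x y Ax Ay | r x Ax] /=; first by rewrite raddfD; exact: AD.
by rewrite linearZ; exact: AZ.
Qed.

End Closure.

Section Retract.
Variables (R : nzRingType) (M N : lmodType R^c).
Variables (i : {linear N -> M}) (p : {linear M -> N}).
Hypothesis ipK : cancel i p.

Lemma addm_preim_full (K : M -> Prop) (K' L : N -> Prop) :
  (forall y, K' y -> K (i y)) -> eqm (addm K' L) fullm ->
  eqm (addm K (L \o p)) fullm.
Proof.
move=> K'K K'L x; split=> // _.
have [k [l [K'k [Ll pxE]]]] := (K'L (p x)).2 I.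
exists (i k), (x - i k); split; first exact: K'K.
split; last by rewrite addrC subrK.
by rewrite /= linearB ipK pxE addrC addKr.
Qed.

Lemma small_mod_retract (X K : M -> Prop) (X' K' : N -> Prop) :
  (forall x, X x -> X' (p x)) -> (forall y, K' y -> K (i y)) ->
  small_mod X K -> small_mod X' K'.
Proof.
move=> XX' K'K XK L sL X'L K'L x; split=> // _.
have Lp := XK (L \o p) (submod_preim p sL) (fun y Xy => X'L _ (XX' y Xy))
  (addm_preim_full K'K K'L).
by rewrite -(ipK x); exact: (Lp (i x)).2.
Qed.

Hypothesis stable : forall A, submod A -> forall x, A x -> A (i (p x)).

Lemma direct_summand_preim (D : M -> Prop) :
  direct_summand D -> direct_summand (D \o i).
Proof.
move=> [sD [D' [sD' [DD' DD'0]]]]; split; first exact: submod_preim.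
exists (D' \o i); split; first exact: submod_preim.
split=> x; split=> //.
- move=> _; have [d [d' [Dd [D'd' ixE]]]] := (DD' (i x)).2 I.
  exists (p d), (p d'); split; first exact: stable sD _ Dd.
  split; first exact: stable sD' _ D'd'.
  by rewrite -linearD -ixE ipK.
- by move=> [Dx D'x]; rewrite -(ipK x) ((DD'0 (i x)).1 (conj Dx D'x)) raddf0.
- by move=> ->; split; rewrite /= raddf0; [exact: sD.1 | exact: sD'.1].
Qed.

Lemma principally_Goldie_star_lifting_retract :
  principally_Goldie_star_lifting M -> principally_Goldie_star_lifting N.
Proof.
move=> pglM n; have [D [dsD [cD_small D_small]]] := pglM (i n).
exists (D \o i); split; first exact: direct_summand_preim.
have K'K y : addm (cyclicm n) (D \o i) y -> addm (cyclicm (i n)) D (i y).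
  move: y => _ [_ [d [[r ->] [Dd ->]]]]; exists (r *: i n), (i d).
  by rewrite linearD linearZ; split=> //; exists r.
split; [apply: small_mod_retract _ K'K cD_small
      | apply: small_mod_retract _ K'K D_small].
- by move=> _ [r ->]; exists r; rewrite linearZ ipK.
- by move=> x Dx; exact: stable dsD.1 _ Dx.
Qed.

Lemma full_preim_of_small_mod (X K L : M -> Prop) (X' K' : N -> Prop) :
  (forall x, X' x -> exists2 y, X y & p y = x) ->
  (forall y, K y -> K' (p y)) -> small_mod X' K' ->
  submod L -> subm X L -> eqm (addm K L) fullm -> eqm (L \o i) fullm.
Proof.
move=> X'X KK' X'K' sL XL KL; apply: X'K'; first exact: submod_preim.
  by move=> x /X'X [y Xy <-]; exact: stable sL _ (XL _ Xy).
move=> x; split=> // _; have [k [l [Kk [Ll ixE]]]] := (KL (i x)).2 I.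
exists (p k), (p l); split; first exact: KK'.
split; first exact: stable sL _ Ll.
by rewrite -linearD -ixE ipK.
Qed.

End Retract.

Section Biproduct.
Variables (R : nzRingType) (M1 M2 : lmodType R^c).
Local Notation M := (M1 * M2)%type.

Definition in1 (a : M1) : M := (a, 0).
Definition in2 (b : M2) : M := (0, b).

Fact in1_is_linear : linear in1.
Proof. by move=> r a b; congr pair; rewrite /= scaler0 addr0. Qed.
HB.instance Definition _ := GRing.isLinear.Build _ _ _ _ in1 in1_is_linear.

Fact in2_is_linear : linear in2.
Proof. by move=> r a b; congr pair; rewrite /= scaler0 addr0. Qed.
HB.instance Definition _ := GRing.isLinear.Build _ _ _ _ in2 in2_is_linear.

Definition prodm (A1 : M1 -> Prop) (A2 : M2 -> Prop) : M -> Prop :=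
  capm (A1 \o fst) (A2 \o snd).

Definition split_submodules : Prop :=
  forall N : M -> Prop, submod N -> forall x, N x -> N (in1 x.1).

Lemma split_submodules_snd : split_submodules ->
  forall N : M -> Prop, submod N -> forall x, N x -> N (in2 x.2).
Proof.
move=> splitM N sN [a b] Nab.
have -> : in2 b = (a, b) - in1 a by congr pair; rewrite /= (subrr, subr0).
exact: submodB (splitM N sN _ Nab).
Qed.

Lemma duo_split_submodules : duo M -> split_submodules.
Proof. by move=> duoM N sN; exact: (duoM N sN (in1 \o fst)). Qed.

Lemma distributive_split_submodules : distributive M -> split_submodules.
Proof.
(* (a, 0) = (0, -b) + (a, b) lies in (K1 + N) :&: (K1 + K2) = K1 + (N :&: K2),
   and its (N :&: K2)-component can only be (a, 0) itself. *)
move=> distrM N sN [a b] Nab.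
pose K1 : M -> Prop := @zerom _ M1 \o fst.
pose K2 : M -> Prop := @zerom _ M2 \o snd.
have sK1 : submod K1 by exact: submod_preim (submod_zerom M1).
have sK2 : submod K2 by exact: submod_preim (submod_zerom M2).
have a0_in_sum : capm (addm K1 N) (addm K1 K2) (in1 a).
  split; first exists (0, - b), (a, b).
    by split; [|split=> //; congr pair; rewrite /= (add0r, addNr)].
  by exists 0, (in1 a); split; [|split=> //; rewrite add0r].
have [u [v [u1 [[Nv v2] aE]]]] := (distrM _ _ _ sK1 sN sK2 (in1 a)).2 a0_in_sum.
rewrite /K1 /K2 /zerom /= in u1 v2.
suff -> : in1 a = v by [].
by case: v Nv aE v2 => v1 _ _ [-> _] /= ->; rewrite u1 add0r.
Qed.

Lemma direct_summand_prodm (D1 : M1 -> Prop) (D2 : M2 -> Prop) :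
  direct_summand D1 -> direct_summand D2 -> direct_summand (prodm D1 D2).
Proof.
move=> [sD1 [D1' [sD1' [DD1 DD1'0]]]] [sD2 [D2' [sD2' [DD2 DD2'0]]]].
have sprod A1 A2 : submod A1 -> submod A2 -> submod (prodm A1 A2).
  by move=> sA1 sA2; apply: submod_capm; exact: submod_preim.
split; first exact: sprod.
exists (prodm D1' D2'); split; first exact: sprod.
split=> -[x1 x2]; split=> //.
- move=> _; have [d1 [e1 [Dd1 [D'e1 ->]]]] := (DD1 x1).2 I.
  have [d2 [e2 [Dd2 [D'e2 ->]]]] := (DD2 x2).2 I.
  by exists (d1, d2), (e1, e2).
- move=> [[/= Dx1 Dx2] [/= D'x1 D'x2]].
  by rewrite ((DD1'0 x1).1 (conj Dx1 D'x1)) ((DD2'0 x2).1 (conj Dx2 D'x2)).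
- by case=> -> ->; do !split; [exact: sD1.1 | exact: sD2.1 | exact: sD1'.1
    | exact: sD2'.1].
Qed.

Lemma full_of_traces (L : M -> Prop) : submod L ->
  eqm (L \o in1) fullm -> eqm (L \o in2) fullm -> eqm L fullm.
Proof.
move=> [_ [LD _]] L1 L2 [x1 x2]; split=> // _.
have := LD _ _ ((L1 x1).2 I) ((L2 x2).2 I).
by congr L; congr pair; rewrite /= (addr0, add0r).
Qed.

Lemma addm_cyclicm_prodm (m : M) (D1 : M1 -> Prop) (D2 : M2 -> Prop) y :
  addm (cyclicm m) (prodm D1 D2) y ->
  addm (cyclicm m.1) D1 y.1 /\ addm (cyclicm m.2) D2 y.2.
Proof.
move=> [_ [d [[r ->] [[Dd1 Dd2] ->]]]].
by split; [exists (r *: m.1), d.1 | exists (r *: m.2), d.2];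
  do !split=> //; exists r.
Qed.

Hypothesis splitM : split_submodules.

Lemma principally_Goldie_star_lifting_fst :
  principally_Goldie_star_lifting M -> principally_Goldie_star_lifting M1.
Proof.
exact: (principally_Goldie_star_lifting_retract (i := in1) (p := fst)
  (fun=> erefl) splitM).
Qed.

Lemma principally_Goldie_star_lifting_snd :
  principally_Goldie_star_lifting M -> principally_Goldie_star_lifting M2.
Proof.
exact: (principally_Goldie_star_lifting_retract (i := in2) (p := snd)
  (fun=> erefl) (split_submodules_snd splitM)).
Qed.

Lemma principally_Goldie_star_lifting_prod :
  principally_Goldie_star_lifting M1 -> principally_Goldie_star_lifting M2 ->
  principally_Goldie_star_lifting M.
Proof.
move=> pgl1 pgl2 m.
have [D1 [dsD1 [cD1_small D1_small]]] := pgl1 m.1.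
have [D2 [dsD2 [cD2_small D2_small]]] := pgl2 m.2.
have full1 :=
  full_preim_of_small_mod (i := in1) (p := fst) (fun=> erefl) splitM.
have full2 := full_preim_of_small_mod (i := in2) (p := snd) (fun=> erefl)
  (split_submodules_snd splitM).
exists (prodm D1 D2); split; first exact: direct_summand_prodm.
split=> L sL XL KL; apply: (full_of_traces sL).
- apply: full1 cD1_small sL XL KL.
  + by move=> _ [r ->]; exists (r *: m) => //; exists r.
  + by move=> y /addm_cyclicm_prodm [].
- apply: full2 cD2_small sL XL KL.
  + by move=> _ [r ->]; exists (r *: m) => //; exists r.
  + by move=> y /addm_cyclicm_prodm [].
- apply: full1 D1_small sL XL KL.
  + by move=> x D1x; exists (in1 x) => //; split=> //; exact: dsD2.1.1.
  + by move=> y /addm_cyclicm_prodm [].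
- apply: full2 D2_small sL XL KL.
  + by move=> x D2x; exists (in2 x) => //; split=> //; exact: dsD1.1.1.
  + by move=> y /addm_cyclicm_prodm [].
Qed.

End Biproduct.

Theorem proposition3p8 (R : nzRingType) (M1 M2 : lmodType R^c) :
  (duo (M1 * M2)%type \/ distributive (M1 * M2)%type) ->
  (principally_Goldie_star_lifting (M1 * M2)%type <->
   principally_Goldie_star_lifting M1 /\ principally_Goldie_star_lifting M2).
Proof.
move=> duo_or_distr.
have splitM : split_submodules M1 M2.
  by case: duo_or_distr; [exact: duo_split_submodules
    | exact: distributive_split_submodules].
split=> [pglM | [pgl1 pgl2]].
- by split; [exact: principally_Goldie_star_lifting_fst splitM pglM
    | exact: principally_Goldie_star_lifting_snd splitM pglM].
- exact: principally_Goldie_star_lifting_prod splitM pgl1 pgl2.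
Qed.
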